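(* Let $T=(K_n,K_p,R_s,R_d,C,\mathsf{n})$ be an argumentation theory, let $G(T)$ be its full grounding, and let $G_{DL}(T)$ be the grounding of $T$ obtained via the Datalog program $P_T$ (Transformation 1), both as defined in the context. Then $$\mathrm{Args}(G(T))=\mathrm{Args}(G_{DL}(T))\quad\text{and}\quad \mathrm{Att}(G(T))=\mathrm{Att}(G_{DL}(T)),$$ i.e. the two ground theories induce the same abstract argumentation framework.
   Context: Work over a function-free first-order signature (predicates and constants); atoms are $p(t_1,\dots,t_k)$ with each $t_i$ a constant or variable. An argumentation theory is $T=(K_n,K_p,R_s,R_d,C,\mathsf{n})$ where: $K_n$ (axioms) and $K_p$ (ordinary premises) are finite sets of ground atoms; $R_s$ (strict rules) is a finite set of rules $b_1(\vec X_1),\dots,b_m(\vec X_m)\to h(\vec Y)$ and $R_d$ (defeasible rules) a finite set of rules $b_1(\vec X_1),\dots,b_m(\vec X_m)\Rightarrow h(\vec Y)$, where every variable of the head occurs in the body; each $r\in R_d$ carries a name atom $\mathsf{n}(r)=\nu_r(\vec Z)$ whose variables occur in the body of $r$; $C$ is a finite set of contrariness rules $c: s(\vec X)\rightsquigarrow S(\vec X)$, where $s(\vec X)$ is an atom and $S(\vec X)$ a finite set of atoms whose variables occur in $\vec X$. The Herbrand universe $HU(T)$ is the set of constants occurring in $T$; a ground substitution maps variables to $HU(T)$, and for a rule or contrariness rule $x$ and ground substitution $\sigma$, $x\sigma$ is its ground instance (with $\mathsf{n}(r\sigma)=\mathsf{n}(r)\sigma$). The full grounding $G(T)$ has the same $K_n,K_p$,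 and as rules and contrariness rules all ground instances $x\sigma$ of those of $T$. For a ground theory $G$ with premises $K_n\cup K_p$, rules $R$ and contrariness rules $C'$: arguments are defined inductively: each $k\in K_n\cup K_p$ is an argument with conclusion $\mathrm{conc}=k$, premises $\mathrm{Prem}=\{k\}$, no rules; if $A_1,\dots,A_m$ are arguments and $r\in R$ is a ground rule with body $\mathrm{conc}(A_1),\dots,\mathrm{conc}(A_m)$ and head $h$, then $A=\langle A_1,\dots,A_m\to h\rangle$ is an argument with $\mathrm{conc}(A)=h$, top rule $\mathrm{top}(A)=r$, $\mathrm{Prem}(A)=\bigcup_i\mathrm{Prem}(A_i)$, $\mathrm{Rules}(A)=\{r\}\cup\bigcup_i\mathrm{Rules}(A_i)$, and subarguments $\mathrm{Sub}(A)=\{A\}\cup\bigcup_i\mathrm{Sub}(A_i)$. The weak points of $A$ are $\mathrm{wp}(A)=(\mathrm{Prem}(A)\cap K_p)\cup\bigcup_{r\in\mathrm{Rules}(A)\cap R_d}\{\mathrm{head}(r),\mathsf{n}(r)\}$. Argument $A$ attacks $A'$ iff there is a ground contrariness rule $s\rightsquigarrow S$ in $C'$ with $s\in\mathrm{wp}(A')$ and $\mathrm{conc}(A)\in S$. $\mathrm{Args}(G)$ and $\mathrm{Att}(G)$ denote the set of arguments and the attack relation. Transformation 1: the Datalog program $P_T$ contains the fact $k.$ for every $k\in K_n\cup K_p$, and for every rule $r\in R_s\cup R_d$ with body $b_1(\vec X_1),\dots,b_m(\vec X_m)$, head $h(\vec Y)$ and variable list $\vec X$ (all variables of $r$), with a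 fresh predicate $\mathrm{aux}_r$: the rules $\mathrm{aux}_r(\vec X)\leftarrow b_1(\vec X_1),\dots,b_m(\vec X_m)$ and $h(\vec Y)\leftarrow \mathrm{aux}_r(\vec X)$, and, if $r\in R_d$ with $\mathsf{n}(r)=\nu_r(\vec Z)$, additionally $\nu_r(\vec Z)\leftarrow\mathrm{aux}_r(\vec X)$. Let $M$ be the least Herbrand model of $P_T$. The grounding via Datalog $G_{DL}(T)$ has premises $K_n,K_p$, rules $\{r\sigma : r\in R_s\cup R_d,\ \mathrm{aux}_r(\vec X)\sigma\in M\}$ (strict/defeasible as $r$), and contrariness rules $\{c\sigma: c=(s(\vec X)\rightsquigarrow S(\vec X))\in C,\ s(\vec X)\sigma\in M\}$. *)

(* Function-free first-order signature: constants, predicate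
   symbols and variables are all represented by natural numbers. *)
From Stdlib Require Import List Arith.
Import ListNotations.

Inductive term := TC (c : nat) | TV (v : nat).
Record atom := mkAtom { apred : nat; aargs : list term }.
Record gatom := mkGAtom { gpred : nat; gargs : list nat }.

Record rule := mkRule { rbody : list atom; rhead : atom }.
Record drule := mkDRule { drl : rule; dname : atom }.
(* contrariness rule  s(X) ~> S(X) *)
Record crule := mkCRule { cs : atom; cS : list atom }.

Record theory := mkTheory {
  Kn : list gatom; Kp : list gatom;
  Rs : list rule; Rd : list drule; Cr : list crule }.

Definition term_vars (t : term) : list nat :=
  match t with TV v => [v] | TC _ => [] end.
Definition term_consts (t : term) : list nat :=
  match t with TC c => [c] | TV _ => [] end.
Definition atom_vars (a : atom) : list nat := flat_map term_vars (aargs a).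
Definition atom_consts (a : atom) : list nat := flat_map term_consts (aargs a).

Definition allrules (T : theory) : list (rule * option atom) :=
  map (fun r => (r, None)) (Rs T) ++ map (fun d => (drl d, Some (dname d))) (Rd T).

Definition name_atoms (nm : option atom) : list atom :=
  match nm with Some a => [a] | None => [] end.

(* the variable list X of a rule: all its variables, without repetition *)
Definition rn_vars (rn : rule * option atom) : list nat :=
  nodup Nat.eq_dec (flat_map atom_vars (rbody (fst rn)) ++ atom_vars (rhead (fst rn))
                    ++ flat_map atom_vars (name_atoms (snd rn))).
Definition crule_vars (c : crule) : list nat :=
  nodup Nat.eq_dec (atom_vars (cs c) ++ flat_map atom_vars (cS c)).

Definition HU (T : theory) : list nat :=
  flat_map gargs (Kn T ++ Kp T)
  ++ flat_map (fun rn => flat_map atom_consts (rhead (fst rn) :: rbody (fst rn) ++ name_atoms (snd rn)))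
              (allrules T)
  ++ flat_map (fun c => flat_map atom_consts (cs c :: cS c)) (Cr T).

Definition wf_theory (T : theory) : Prop :=
  (forall rn, In rn (allrules T) ->
     (forall v, In v (atom_vars (rhead (fst rn))) -> In v (flat_map atom_vars (rbody (fst rn)))) /\
     (forall a v, snd rn = Some a -> In v (atom_vars a) -> In v (flat_map atom_vars (rbody (fst rn))))) /\
  (forall c, In c (Cr T) ->
     forall v, In v (flat_map atom_vars (cS c)) -> In v (atom_vars (cs c))).

Definition ground_sub_on (U vs : list nat) (sigma : nat -> nat) : Prop :=
  forall v, In v vs -> In (sigma v) U.

Definition gterm (sigma : nat -> nat) (t : term) : nat :=
  match t with TC c => c | TV v => sigma v end.
Definition gatom_of (sigma : nat -> nat) (a : atom) : gatom :=
  mkGAtom (apred a) (map (gterm sigma) (aargs a)).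

(* ground rule; gname = None for strict, Some n(r) for defeasible rules *)
Record grule := mkGRule { gbody : list gatom; ghead : gatom; gname : option gatom }.
Record gcrule := mkGCRule { gcs : gatom; gcS : list gatom }.

Definition ground_rn (sigma : nat -> nat) (rn : rule * option atom) : grule :=
  mkGRule (map (gatom_of sigma) (rbody (fst rn))) (gatom_of sigma (rhead (fst rn)))
          (option_map (gatom_of sigma) (snd rn)).
Definition ground_crule (sigma : nat -> nat) (c : crule) : gcrule :=
  mkGCRule (gatom_of sigma (cs c)) (map (gatom_of sigma) (cS c)).

Record gtheory := mkGTheory {
  gKn : list gatom; gKp : list gatom;
  gRules : grule -> Prop; gCon : gcrule -> Prop }.

Inductive arg := APrem (k : gatom) | ARule (r : grule) (subs : list arg).

Definition conc (A : arg) : gatom :=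
  match A with APrem k => k | ARule r _ => ghead r end.

Inductive isArg (G : gtheory) : arg -> Prop :=
| isArg_prem k : In k (gKn G ++ gKp G) -> isArg G (APrem k)
| isArg_rule r subs : gRules G r -> (forall B, In B subs -> isArg G B) ->
    map conc subs = gbody r -> isArg G (ARule r subs).

Inductive inPrem (k : gatom) : arg -> Prop :=
| inPrem_here : inPrem k (APrem k)
| inPrem_sub r subs B : In B subs -> inPrem k B -> inPrem k (ARule r subs).

Inductive inRules (r : grule) : arg -> Prop :=
| inRules_top subs : inRules r (ARule r subs)
| inRules_sub r' subs B : In B subs -> inRules r B -> inRules r (ARule r' subs).

Definition wp (G : gtheory) (A : arg) (x : gatom) : Prop :=
  (inPrem x A /\ In x (gKp G)) \/
  (exists r n, inRules r A /\ gRules G r /\ gname r = Some n /\ (x = ghead r \/ x = n)).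

Definition attacks (G : gtheory) (A A' : arg) : Prop :=
  exists c, gCon G c /\ wp G A' (gcs c) /\ In (conc A) (gcS c).

Definition Att (G : gtheory) (A A' : arg) : Prop :=
  isArg G A /\ isArg G A' /\ attacks G A A'.

Definition full_grounding (T : theory) : gtheory :=
  mkGTheory (Kn T) (Kp T)
    (fun g => exists rn sigma, In rn (allrules T) /\
       ground_sub_on (HU T) (rn_vars rn) sigma /\ g = ground_rn sigma rn)
    (fun g => exists c sigma, In c (Cr T) /\
       ground_sub_on (HU T) (crule_vars c) sigma /\ g = ground_crule sigma c).

Inductive dpred := DOrig (p : nat) | DAux (i : nat).
Record datom := mkDAtom { dpr : dpred; dargs : list term }.
Record clause := mkClause { chead : datom; cbody : list datom }.
Record gdatom := mkGDAtom { gdpr : dpred; gdargs : list nat }.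

Definition gdatom_of (sigma : nat -> nat) (a : datom) : gdatom :=
  mkGDAtom (dpr a) (map (gterm sigma) (dargs a)).
Definition datom_vars (a : datom) : list nat := flat_map term_vars (dargs a).
Definition datom_consts (a : datom) : list nat := flat_map term_consts (dargs a).
Definition clause_vars (cl : clause) : list nat := flat_map datom_vars (chead cl :: cbody cl).
Definition prog_consts (P : list clause) : list nat :=
  flat_map (fun cl => flat_map datom_consts (chead cl :: cbody cl)) P.

(* least Herbrand model of a Datalog program (least fixpoint of T_P) *)
Inductive lhm (P : list clause) : gdatom -> Prop :=
| lhm_rule cl sigma : In cl P -> ground_sub_on (prog_consts P) (clause_vars cl) sigma ->
    (forall b, In b (cbody cl) -> lhm P (gdatom_of sigma b)) ->
    lhm P (gdatom_of sigma (chead cl)).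

Definition lift_atom (a : atom) : datom := mkDAtom (DOrig (apred a)) (aargs a).
Definition lift_gatom (k : gatom) : datom := mkDAtom (DOrig (gpred k)) (map TC (gargs k)).
(* aux_r(X) for the rule with index i in allrules T (fresh predicate DAux i) *)
Definition aux_atom (i : nat) (rn : rule * option atom) : datom :=
  mkDAtom (DAux i) (map TV (rn_vars rn)).

Definition rule_clauses (i : nat) (rn : rule * option atom) : list clause :=
  mkClause (aux_atom i rn) (map lift_atom (rbody (fst rn)))
  :: mkClause (lift_atom (rhead (fst rn))) [aux_atom i rn]
  :: map (fun nm => mkClause (lift_atom nm) [aux_atom i rn]) (name_atoms (snd rn)).

Definition PT (T : theory) : list clause :=
  map (fun k => mkClause (lift_gatom k) []) (Kn T ++ Kp T)
  ++ flat_map (fun p => rule_clauses (fst p) (snd p))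
              (combine (seq 0 (length (allrules T))) (allrules T)).

Definition dl_grounding (T : theory) : gtheory :=
  mkGTheory (Kn T) (Kp T)
    (fun g => exists i rn sigma, nth_error (allrules T) i = Some rn /\
       ground_sub_on (HU T) (rn_vars rn) sigma /\
       lhm (PT T) (gdatom_of sigma (aux_atom i rn)) /\ g = ground_rn sigma rn)
    (fun g => exists c sigma, In c (Cr T) /\
       ground_sub_on (HU T) (crule_vars c) sigma /\
       lhm (PT T) (gdatom_of sigma (lift_atom (cs c))) /\ g = ground_crule sigma c).

(* Every ground rule of G_DL(T) is a ground rule of G(T), so one inclusion is
   monotonicity.  Conversely, by induction on arguments of G(T): if the body
   atoms of a ground rule instance are in the least model M, then (the rule
   being range restricted) its substitution only uses constants of P_T, so
   aux_r holds in M and the instance is a rule of G_DL(T), whose head and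
   name then lie in M as well.  Hence every weak point of an argument is in
   M, so every contrariness instance that can be used in an attack survives
   in G_DL(T). *)

From Stdlib Require Import List Lia.
Import ListNotations.

Definition gdatom_of_gatom (k : gatom) : gdatom := mkGDAtom (DOrig (gpred k)) (gargs k).

Definition range_restricted (cl : clause) : Prop :=
  forall v, In v (datom_vars (chead cl)) -> In v (flat_map datom_vars (cbody cl)).

Lemma lhm_consts P g : lhm P g -> forall x, In x (gdargs g) -> In x (prog_consts P).
Proof.
  induction 1 as [cl sigma Hcl Hs _ _]; simpl; intros x Hx.
  apply in_map_iff in Hx as [[c|v] [<- Ht]]; simpl.
  - apply in_flat_map; exists cl; split; [exact Hcl|].
    apply in_or_app; left; apply in_flat_map; exists (TC c); simpl; auto.
  - apply Hs; apply in_or_app; left; apply in_flat_map; exists (TV v); simpl; auto.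
Qed.

Lemma lhm_var_const P sigma b v :
  lhm P (gdatom_of sigma b) -> In v (datom_vars b) -> In (sigma v) (prog_consts P).
Proof.
  intros Hb Hv; apply (lhm_consts _ _ Hb); simpl.
  apply in_flat_map in Hv as [[c|w] [Ht Hv]]; simpl in Hv; [contradiction|].
  destruct Hv as [<-|[]]; exact (in_map (gterm sigma) _ _ Ht).
Qed.

(* The constants needed by the substitution come for free from the body. *)
Lemma lhm_range_restricted P cl sigma :
  In cl P -> range_restricted cl ->
  (forall b, In b (cbody cl) -> lhm P (gdatom_of sigma b)) ->
  lhm P (gdatom_of sigma (chead cl)).
Proof.
  intros Hcl Hrr Hbody; apply lhm_rule; auto.
  assert (Hbv : forall v, In v (flat_map datom_vars (cbody cl)) ->
                          In (sigma v) (prog_consts P)).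
  { intros v Hv; apply in_flat_map in Hv as [b [Hb Hv]].
    exact (lhm_var_const _ _ _ _ (Hbody b Hb) Hv). }
  intros v Hv; apply in_app_or in Hv as [Hv|Hv]; auto.
Qed.

Lemma in_combine_seq {A} (l : list A) k i x :
  nth_error l i = Some x -> In (k + i, x) (combine (seq k (length l)) l).
Proof.
  revert k i; induction l as [|a l IH]; intros k [|i] H; try discriminate; simpl in *.
  - injection H as <-; left; f_equal; lia.
  - right; replace (k + S i) with (S k + i) by lia; auto.
Qed.

Lemma rule_clause_in_PT T i rn cl :
  nth_error (allrules T) i = Some rn -> In cl (rule_clauses i rn) -> In cl (PT T).
Proof.
  intros Hi Hcl; apply in_or_app; right; apply in_flat_map.
  exists (i, rn); split; [exact (in_combine_seq _ 0 _ _ Hi) | exact Hcl].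
Qed.

Lemma fact_in_lhm T k : In k (Kn T ++ Kp T) -> lhm (PT T) (gdatom_of_gatom k).
Proof.
  intros Hk.
  replace (gdatom_of_gatom k)
    with (gdatom_of (fun v => v) (chead (mkClause (lift_gatom k) []))).
  2:{ unfold gdatom_of_gatom, gdatom_of; simpl; rewrite map_map, map_id; reflexivity. }
  apply lhm_range_restricted; simpl; [| |contradiction].
  - apply in_or_app; left; apply in_map_iff; eauto.
  - intros v Hv; apply in_flat_map in Hv as [t [Ht Hv]].
    apply in_map_iff in Ht as [c [<- _]]; contradiction.
Qed.

Lemma aux_atom_vars i rn : datom_vars (aux_atom i rn) = rn_vars rn.
Proof.
  unfold datom_vars, aux_atom; simpl.
  induction (rn_vars rn) as [|v vs IH]; simpl; [reflexivity | f_equal; exact IH].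
Qed.

Lemma datom_vars_lift_atoms (l : list atom) :
  flat_map datom_vars (map lift_atom l) = flat_map atom_vars l.
Proof. induction l as [|a l IH]; simpl; [reflexivity | f_equal; exact IH]. Qed.

Lemma rn_vars_in_body rn v :
  (forall v, In v (atom_vars (rhead (fst rn))) -> In v (flat_map atom_vars (rbody (fst rn)))) ->
  (forall a v, snd rn = Some a -> In v (atom_vars a) -> In v (flat_map atom_vars (rbody (fst rn)))) ->
  In v (rn_vars rn) -> In v (flat_map atom_vars (rbody (fst rn))).
Proof.
  intros Hhead Hname Hv; apply nodup_In in Hv.
  apply in_app_or in Hv as [Hv|Hv]; [exact Hv|].
  apply in_app_or in Hv as [Hv|Hv]; [auto|].
  destruct (snd rn) as [a|] eqn:E; simpl in Hv; [|contradiction].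
  rewrite app_nil_r in Hv; eauto.
Qed.

Lemma aux_clause_range_restricted T i rn :
  wf_theory T -> In rn (allrules T) ->
  range_restricted (mkClause (aux_atom i rn) (map lift_atom (rbody (fst rn)))).
Proof.
  intros [HR _] Hrn v; simpl; rewrite aux_atom_vars, datom_vars_lift_atoms.
  destruct (HR rn Hrn) as [Hhead Hname]; exact (rn_vars_in_body rn v Hhead Hname).
Qed.

Lemma conc_clause_range_restricted i rn a :
  (forall v, In v (atom_vars a) -> In v (rn_vars rn)) ->
  range_restricted (mkClause (lift_atom a) [aux_atom i rn]).
Proof. intros Ha v Hv; simpl; rewrite aux_atom_vars, app_nil_r; auto. Qed.

Lemma rules_of_arg G A r : isArg G A -> inRules r A -> gRules G r.
Proof.
  intros HA HI; revert HA; induction HI as [subs|r' subs B HB _ IH]; intros HA;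
    inversion HA; subst; auto.
Qed.

Lemma isArg_mono G1 G2 A :
  gKn G1 = gKn G2 -> gKp G1 = gKp G2 -> (forall r, gRules G1 r -> gRules G2 r) ->
  isArg G1 A -> isArg G2 A.
Proof.
  intros En Ep Hr; induction 1 as [k Hk|r subs Hr1 _ IH Hmap]; constructor; auto.
  rewrite <- En, <- Ep; exact Hk.
Qed.

(* Weak points only depend on the rules the argument itself uses. *)
Lemma wp_transfer G1 G2 A x :
  gKp G1 = gKp G2 -> isArg G2 A -> wp G1 A x -> wp G2 A x.
Proof.
  intros Ep HA [[Hp Hk]|[r [n [Hr [_ Hn]]]]].
  - left; rewrite <- Ep; auto.
  - right; exists r, n; split; [|split]; eauto using rules_of_arg.
Qed.

Lemma dl_rule_full T r : gRules (dl_grounding T) r -> gRules (full_grounding T) r.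
Proof.
  intros [i [rn [sigma [Hi [Hs [_ ->]]]]]].
  exists rn, sigma; eauto using nth_error_In.
Qed.

Lemma dl_rule_conclusions_in_lhm T r :
  gRules (dl_grounding T) r ->
  lhm (PT T) (gdatom_of_gatom (ghead r)) /\
  (forall n, gname r = Some n -> lhm (PT T) (gdatom_of_gatom n)).
Proof.
  intros [i [rn [sigma [Hi [_ [Haux ->]]]]]].
  assert (Hconc : forall a, (forall v, In v (atom_vars a) -> In v (rn_vars rn)) ->
     In (mkClause (lift_atom a) [aux_atom i rn]) (rule_clauses i rn) ->
     lhm (PT T) (gdatom_of sigma (lift_atom a))).
  { intros a Ha Hin.
    apply (lhm_range_restricted _ (mkClause (lift_atom a) [aux_atom i rn]));
      eauto using rule_clause_in_PT, conc_clause_range_restricted.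
    intros b [<-|[]]; exact Haux. }
  split.
  - apply Hconc; [|simpl; auto].
    intros v Hv; apply nodup_In, in_or_app; right; apply in_or_app; auto.
  - intros n; simpl; destruct (snd rn) as [a|] eqn:E; intros Hn; inversion Hn; subst.
    apply Hconc; [|unfold rule_clauses; rewrite E; simpl; auto].
    intros v Hv; apply nodup_In; rewrite E; simpl; rewrite app_nil_r.
    apply in_or_app; right; apply in_or_app; auto.
Qed.

Lemma full_rule_dl T (HT : wf_theory T) r :
  gRules (full_grounding T) r ->
  (forall b, In b (gbody r) -> lhm (PT T) (gdatom_of_gatom b)) ->
  gRules (dl_grounding T) r.
Proof.
  intros [rn [sigma [Hrn [Hs ->]]]] Hbody.
  destruct (In_nth_error _ _ Hrn) as [i Hi].
  exists i, rn, sigma; repeat split; auto.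
  apply (lhm_range_restricted _ (mkClause (aux_atom i rn) (map lift_atom (rbody (fst rn))))).
  - apply (rule_clause_in_PT T i rn); simpl; auto.
  - exact (aux_clause_range_restricted T i rn HT Hrn).
  - simpl; intros d Hd; apply in_map_iff in Hd as [b [<- Hb]].
    exact (Hbody (gatom_of sigma b) (in_map _ _ _ Hb)).
Qed.

Lemma full_arg_dl T (HT : wf_theory T) A :
  isArg (full_grounding T) A ->
  isArg (dl_grounding T) A /\ lhm (PT T) (gdatom_of_gatom (conc A)).
Proof.
  induction 1 as [k Hk|r subs Hr _ IH Hmap].
  - split; [constructor; exact Hk | exact (fact_in_lhm T k Hk)].
  - assert (Hrdl : gRules (dl_grounding T) r).
    { apply (full_rule_dl T HT r Hr); rewrite <- Hmap; intros b Hb.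
      apply in_map_iff in Hb as [B [<- HB]]; exact (proj2 (IH B HB)). }
    split.
    + constructor; auto; intros B HB; exact (proj1 (IH B HB)).
    + exact (proj1 (dl_rule_conclusions_in_lhm T r Hrdl)).
Qed.

Lemma wp_in_lhm T A x :
  isArg (dl_grounding T) A -> wp (dl_grounding T) A x -> lhm (PT T) (gdatom_of_gatom x).
Proof.
  intros HA [[_ Hk]|[r [n [_ [Hr [Hn [->| ->]]]]]]].
  - apply fact_in_lhm, in_or_app; auto.
  - exact (proj1 (dl_rule_conclusions_in_lhm T r Hr)).
  - exact (proj2 (dl_rule_conclusions_in_lhm T r Hr) n Hn).
Qed.

Lemma full_con_dl T c :
  gCon (full_grounding T) c -> lhm (PT T) (gdatom_of_gatom (gcs c)) ->
  gCon (dl_grounding T) c.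
Proof. intros [c0 [sigma [Hc [Hs ->]]]] Hm; exists c0, sigma; auto. Qed.

Lemma dl_con_full T c : gCon (dl_grounding T) c -> gCon (full_grounding T) c.
Proof. intros [c0 [sigma [Hc [Hs [_ ->]]]]]; exists c0, sigma; auto. Qed.

Lemma attacks_full_dl T A B :
  isArg (dl_grounding T) B -> attacks (full_grounding T) A B -> attacks (dl_grounding T) A B.
Proof.
  intros HB [c [Hc [Hw Hin]]].
  assert (Hwdl : wp (dl_grounding T) B (gcs c))
    by exact (wp_transfer (full_grounding T) (dl_grounding T) _ _ eq_refl HB Hw).
  exists c; repeat split; auto.
  exact (full_con_dl T c Hc (wp_in_lhm T B _ HB Hwdl)).
Qed.

Lemma attacks_dl_full T A B :
  isArg (full_grounding T) B -> attacks (dl_grounding T) A B -> attacks (full_grounding T) A B.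
Proof.
  intros HB [c [Hc [Hw Hin]]]; exists c; repeat split; auto using dl_con_full.
  exact (wp_transfer (dl_grounding T) (full_grounding T) _ _ eq_refl HB Hw).
Qed.

Theorem lemma1 (T : theory) (HT : wf_theory T) :
  (forall A : arg, isArg (full_grounding T) A <-> isArg (dl_grounding T) A) /\
  (forall A B : arg, Att (full_grounding T) A B <-> Att (dl_grounding T) A B).
Proof.
  assert (Hargs : forall A, isArg (full_grounding T) A <-> isArg (dl_grounding T) A).
  { intros A; split; [exact (fun H => proj1 (full_arg_dl T HT A H))|].
    apply isArg_mono; auto using dl_rule_full. }
  split; [exact Hargs|]; intros A B; split; intros [HA [HB Hatt]].
  - apply Hargs in HA, HB; split; [|split]; auto using attacks_full_dl.
  - apply Hargs in HA, HB; split; [|split]; auto using attacks_dl_full.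
Qed.
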